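(* For a pseudocompact (Tychonoff) space $X$, $X$ is a $C$-space if and only if $X$ is a finite $C$-space.
   Context: A set is functionally open if it is a cozero set. $X$ is a $C$-space if every sequence $\{\omega_n\}$ of locally finite covers of $X$ by functionally open sets has a $C$-refinement $\{\gamma_n\}$ (each $\gamma_n$ a disjoint family of open sets refining $\omega_n$, with $\bigcup_n\gamma_n$ covering $X$) such that $\bigcup_n\gamma_n$ is a locally finite cover of $X$ by functionally open sets. $X$ is a finite $C$-space if for every sequence $\{\omega_n\}$ of finite covers of $X$ by functionally open sets there exist $k$ and finite families $\gamma_1,\dots,\gamma_k$ of pairwise disjoint functionally open sets such that each $\gamma_n$ refines $\omega_n$ and $\bigcup_{n=1}^k\gamma_n$ covers $X$. *)

From mathcomp Require Import all_boot all_order all_algebra.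
From mathcomp Require Import all_classical all_reals all_analysis.
From mathcomp Require Import Rstruct Rstruct_topology.
From Stdlib Require Import Reals.
Set Implicit Arguments. Unset Strict Implicit. Unset Printing Implicit Defensive.
Import Order.TTheory GRing.Theory Num.Theory.
Local Open Scope classical_set_scope.
Local Open Scope ring_scope.

Section CSpaces.
Variable X : topologicalType.

Definition functionally_open (U : set X) : Prop :=
  exists f : X -> R, continuous f /\ U = [set x | f x != 0].

Definition tychonoff_space : Prop :=
  accessible_space X /\
  forall (a : X) (B : set X), closed B -> ~ B a ->
    exists f : X -> R, continuous f /\ f a = 0 /\ (forall b, B b -> f b = 1).

Definition pseudocompact : Prop :=
  forall f : X -> R, continuous f -> exists M : R, forall x, `|f x| <= M.

Definition covers (w : set (set X)) : Prop :=
  forall x, exists2 A, w A & A x.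

Definition loc_finite (w : set (set X)) : Prop :=
  forall x : X, exists2 U, nbhs x U & finite_set [set A | w A /\ A `&` U !=set0].

Definition refines (g w : set (set X)) : Prop :=
  forall G, g G -> exists2 W, w W & G `<=` W.

Definition disjoint_family (g : set (set X)) : Prop :=
  forall G H, g G -> g H -> G <> H -> G `&` H = set0.

Definition all_open (g : set (set X)) : Prop := forall G, g G -> open G.

Definition all_functionally_open (g : set (set X)) : Prop :=
  forall G, g G -> functionally_open G.

Definition C_space : Prop :=
  forall w : nat -> set (set X),
    (forall n, covers (w n) /\ loc_finite (w n) /\ all_functionally_open (w n)) ->
    exists g : nat -> set (set X),
      (forall n, disjoint_family (g n) /\ all_open (g n) /\ refines (g n) (w n)) /\
      covers (\bigcup_n g n) /\ loc_finite (\bigcup_n g n) /\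
      all_functionally_open (\bigcup_n g n).

(* finite C-space; indices shifted to start at 0: gamma_0,...,gamma_{k-1} *)
Definition finite_C_space : Prop :=
  forall w : nat -> set (set X),
    (forall n, covers (w n) /\ finite_set (w n) /\ all_functionally_open (w n)) ->
    exists (k : nat) (g : nat -> set (set X)),
      (forall n : nat, (n < k)%nat ->
         finite_set (g n) /\ disjoint_family (g n) /\
         all_functionally_open (g n) /\ refines (g n) (w n)) /\
      covers (\bigcup_(n in [set n : nat | (n < k)%nat]) g n).

End CSpaces.

(* In a pseudocompact space a locally finite family of functionally open sets
   has only finitely many nonempty members: otherwise pick points x_i in
   infinitely many distinct members and continuous f_i >= 0 vanishing off the
   i-th member with f_i(x_i) = i; the locally finite sum of the f_i is then an
   unbounded continuous function. Consequently the locally finite covers in the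
   definition of a C-space may be replaced by finite ones, and a locally finite
   C-refinement has only finitely many nonempty members, which lie in finitely
   many of its layers. *)

From mathcomp Require Import all_boot all_order all_algebra.
From mathcomp Require Import all_classical all_reals all_analysis.
From mathcomp Require Import Rstruct Rstruct_topology.
From Stdlib Require Import Reals.
From mathcomp Require Import finmap.
Set Implicit Arguments. Unset Strict Implicit. Unset Printing Implicit Defensive.
Import Order.TTheory GRing.Theory Num.Theory.
Local Open Scope classical_set_scope.
Local Open Scope ring_scope.

Lemma finite_nat_subset_II (S : set nat) : finite_set S -> exists m, S `<=` `I_m.
Proof.
move=> /finite_fsetP[s ->]; exists (\big[maxn/0%nat]_(j <- s) j).+1 => i iS /=.
by rewrite ltnS; exact: (@leq_bigmax_seq _ _ xpredT (fun j => j) i iS).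
Qed.

Lemma finite_subset_bigcup_nat (T : Type) (F : set T) (g : nat -> set T) :
  finite_set F -> F `<=` \bigcup_n g n -> exists k, F `<=` \bigcup_(n in `I_k) g n.
Proof.
move=> finF Fg.
have /choice[idx idxP] : forall A, exists n, F A -> g n A.
  move=> A; have [/Fg[n _ gnA]|nFA] := pselect (F A); first by exists n.
  by exists 0%nat => /nFA.
have [k idxk] := finite_nat_subset_II (finite_image idx finF).
by exists k => A FA; exists (idx A); [apply: idxk; exists A | exact: idxP].
Qed.

Lemma sum_ord_tail0 (V : nmodType) (F : nat -> V) (m n : nat) : (m <= n)%nat ->
  (forall i, (m <= i)%nat -> F i = 0) -> \sum_(i < n) F i = \sum_(i < m) F i.
Proof.
move=> mn F0; rewrite -(subnKC mn) big_split_ord /=.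
by rewrite [X in _ + X]big1 ?addr0 // => i _; apply: F0; exact: leq_addr.
Qed.

Section LocallyFiniteSum.
Variable X : topologicalType.

Definition locally_finite_seq (f : nat -> X -> R) : Prop :=
  forall x : X, exists2 U, nbhs x U &
    exists m, forall i, (m <= i)%nat -> forall y, U y -> f i y = 0.

Lemma continuous_sum_ord (f : nat -> X -> R) (m : nat) :
  (forall i, continuous (f i)) -> continuous (fun y => \sum_(i < m) f i y).
Proof.
move=> fc; rewrite -fct_sumE.
apply: (big_ind (fun g : X -> R => continuous g)) => // [|g h gc hc x]; first exact: cst_continuous.
exact: (@continuousD R R^o X g h x (gc x) (hc x)).
Qed.

Lemma locally_finite_sum_continuous (f : nat -> X -> R) :
  (forall i, continuous (f i)) -> locally_finite_seq f ->
  exists h : X -> R, continuous h /\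
    forall x m, (forall i, (m <= i)%nat -> f i x = 0) -> h x = \sum_(i < m) f i x.
Proof.
move=> fc lf.
have /choice[N NP] : forall x, exists N, forall i, (N <= i)%nat -> f i x = 0.
  move=> x; have [U Ux [m mP]] := lf x.
  by exists m => i mi; apply: mP mi _ (nbhs_singleton Ux).
pose h x := \sum_(i < N x) f i x.
have hE x m : (forall i, (m <= i)%nat -> f i x = 0) -> h x = \sum_(i < m) f i x.
  move=> mP; rewrite /h -(@sum_ord_tail0 _ (f^~ x) (N x) (maxn (N x) m)) ?leq_maxl //;
    last exact: NP.
  by rewrite (@sum_ord_tail0 _ (f^~ x) m) ?leq_maxr.
exists h; split; last exact: hE.
move=> x; have [U Ux [m mP]] := lf x.
rewrite /continuous_at (hE x m); last by move=> i mi; apply: mP mi _ (nbhs_singleton Ux).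
have sum_cont : continuous (fun y => \sum_(i < m) f i y) := continuous_sum_ord fc.
apply: cvg_trans (sum_cont x); apply: near_eq_cvg.
by apply: filterS Ux => y Uy; rewrite (hE y m) // => i mi; apply: mP.
Qed.

Lemma locally_finite_bumps_not_pseudocompact (f : nat -> X -> R) (x : nat -> X) :
  (forall i, continuous (f i)) -> (forall i y, 0 <= f i y) ->
  (forall i, f i (x i) = i%:R) -> locally_finite_seq f -> ~ pseudocompact X.
Proof.
move=> fc f0 fx lf pc.
have [h [hc hE]] := locally_finite_sum_continuous fc lf.
have [M hM] := pc h hc; pose j := Num.bound `|M|.
have [U Ux [m mP]] := lf (x j).
have h_ge_j : j%:R <= h (x j).
  rewrite (hE _ (maxn m j.+1)); last first.
    by move=> i mi; apply: mP (nbhs_singleton Ux); exact: leq_trans (leq_maxl _ _) mi.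
  have jm : (j < maxn m j.+1)%nat by rewrite leq_max ltnSn orbT.
  rewrite (bigD1 (Ordinal jm)) //= fx lerDl.
  by apply: sumr_ge0 => i _.
have h_le_M : h (x j) <= `|M|.
  exact: le_trans (ler_norm _) (le_trans (hM _) (ler_norm _)).
have := le_lt_trans (le_trans h_ge_j h_le_M) (archi_boundP (normr_ge0 M)).
by rewrite ltxx.
Qed.

End LocallyFiniteSum.

Section FunctionallyOpen.
Variable X : topologicalType.
Implicit Types (U : set X) (w : set (set X)).

Lemma functionally_open_open U : functionally_open U -> open U.
Proof.
move=> [f [fc ->]]; rewrite -[X in open X]/(f @^-1` [set r | r != 0]).
by apply: open_comp => [x _|]; [exact: fc | exact: open_neq].
Qed.

Lemma functionally_open_bump U x (c : R) : functionally_open U -> U x -> 0 <= c ->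
  exists f : X -> R, [/\ continuous f, forall y, 0 <= f y, f x = c &
                        forall y, ~ U y -> f y = 0].
Proof.
move=> [g [gc ->]] /= gx c0; exists (fun y => `|g y| * (c / `|g x|)); split.
- move=> y; apply: cvgMr_tmp.
  exact: (continuous_comp (gc y) (@norm_continuous _ R^o _)).
- by move=> y; rewrite mulr_ge0 ?divr_ge0.
- by rewrite mulrCA mulfV ?mulr1 // normr_eq0.
- by move=> y /negP; rewrite negbK => /eqP ->; rewrite normr0 mul0r.
Qed.

Definition nonempty_members w : set (set X) := [set A | w A /\ A !=set0].

Lemma finite_loc_finite w : finite_set w -> loc_finite w.
Proof.
move=> finw x; exists setT; first exact: filterT.
by apply: sub_finite_set finw => A [].
Qed.

Lemma pseudocompact_loc_finite_finite w : pseudocompact X ->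
  loc_finite w -> all_functionally_open w -> finite_set (nonempty_members w).
Proof.
move=> pc lf fo; apply: contrapT => /infiniteP/pcard_leP/injfunPex[e eS einj].
have /choice[x xe] : forall i, exists x, e i x.
  by move=> i; have [_ [x ex]] := eS i I; exists x.
have /choice[f fP] : forall i, exists f : X -> R, [/\ continuous f,
    forall y, 0 <= f y, f (x i) = i%:R & forall y, ~ e i y -> f y = 0].
  by move=> i; apply: functionally_open_bump; [exact: fo (eS i I).1|exact: xe|].
apply: (@locally_finite_bumps_not_pseudocompact _ f x) => // [i|i|i|y];
  try by case: (fP i).
have [U Uy finU] := lf y; exists U => //.
have finI : finite_set (e @^-1` [set A | w A /\ A `&` U !=set0]).
  by apply: finite_preimage => // a b _ _; apply: einj; exact: in_setT.
have [m mP] := finite_nat_subset_II finI.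
exists m => i mi z Uz; have [_ _ _ ->] := fP i => // eiz.
have /mP : w (e i) /\ e i `&` U !=set0 by split; [exact: (eS i I).1|exists z].
by rewrite /= ltnNge mi.
Qed.

Lemma pseudocompact_nonempty_members_finite_cover w : pseudocompact X ->
  covers w /\ loc_finite w /\ all_functionally_open w ->
  covers (nonempty_members w) /\ finite_set (nonempty_members w) /\
  all_functionally_open (nonempty_members w).
Proof.
move=> pc [wcov [wlf wfo]]; split; [|split].
- by move=> x; have [A wA Ax] := wcov x; exists A => //; split => //; exists x.
- exact: pseudocompact_loc_finite_finite.
- by move=> A [/wfo].
Qed.

End FunctionallyOpen.

Lemma C_space_finite_C_space (X : topologicalType) :
  pseudocompact X -> C_space X -> finite_C_space X.
Proof.
move=> pc CS w wP.
have wlf n : covers (w n) /\ loc_finite (w n) /\ all_functionally_open (w n).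
  by have [wcov [/finite_loc_finite wlf wfo]] := wP n.
have [g [gP [gcov [glf gfo]]]] := CS w wlf.
have finF := pseudocompact_loc_finite_finite pc glf gfo.
have [k Fk] : exists k, nonempty_members (\bigcup_n g n) `<=`
    \bigcup_(n in `I_k) nonempty_members (g n).
  by apply: finite_subset_bigcup_nat finF _ => A [[n _ gnA] A0]; exists n.
exists k, (fun n => nonempty_members (g n)); split.
- move=> n _; have [gdisj [_ gref]] := gP n; split; [|split; [|split]].
  + by apply: sub_finite_set finF => A [gA A0]; split => //; exists n.
  + by move=> G H [gG _] [gH _]; exact: gdisj.
  + by move=> G [gG _]; apply: gfo; exists n.
  + by move=> G [gG _]; exact: gref.
- move=> x; have [A [n _ gnA] Ax] := gcov x; exists A => //.
  by apply: Fk; split; [exists n|exists x].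
Qed.

Lemma finite_C_space_C_space (X : topologicalType) :
  pseudocompact X -> finite_C_space X -> C_space X.
Proof.
move=> pc FCS w wP.
have [k [g [gP gcov]]] := FCS (fun n => nonempty_members (w n)) (fun n =>
  pseudocompact_nonempty_members_finite_cover pc (wP n)).
pose g' n := if n \in `I_k then g n else set0.
have g'E : \bigcup_n g' n = \bigcup_(n in `I_k) g n by rewrite [RHS]bigcup_mkcond.
have fin_g' : finite_set (\bigcup_n g' n).
  rewrite g'E; apply: bigcup_finite; first exact: finite_II.
  by move=> n /gP[].
exists g'; split; last split; [|by rewrite g'E|split].
- move=> n; rewrite /g'; case: ifPn => [/set_mem nk|_]; last first.
    by split; [move=> ? ? []|split; move=> ? []].
  have [_ [gdisj [gfo gref]]] := gP n nk; split => //; split.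
  + by move=> G /gfo; exact: functionally_open_open.
  + by move=> G /gref[W [wW _] GW]; exists W.
- exact: finite_loc_finite.
- by rewrite g'E => A [n nk gA]; have [_ [_ [gfo _]]] := gP n nk; exact: gfo.
Qed.

Theorem proposition2p1 (X : topologicalType) :
  tychonoff_space X -> pseudocompact X ->
  (C_space X <-> finite_C_space X).
Proof.
move=> _ pc; split; [exact: C_space_finite_C_space | exact: finite_C_space_C_space].
Qed.
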